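(* Let $G$ be a graph of order $n$. Then $a(G)+a(\overline{G})\le n+4$. Moreover, this bound is sharp: for every $n\ge 4$, the path $P_n$ on $n$ vertices satisfies $a(P_n)+a(\overline{P_n})=n+4$.
   Context: All graphs are finite and simple; $\overline{G}$ denotes the complement of $G$. For a graph $G$, $a(G)$ denotes the maximum number of vertices of an induced subgraph of $G$ that is a forest. The order of a graph is its number of vertices. *)

From Stdlib Require Import ClassicalEpsilon.
From mathcomp Require Import all_boot.
Set Implicit Arguments. Unset Strict Implicit. Unset Printing Implicit Defensive.

Definition simple_graph (T : finType) (e : rel T) : Prop :=
  symmetric e /\ irreflexive e.

Definition compl_graph (T : finType) (e : rel T) : rel T :=
  fun x y => (x != y) && ~~ e x y.

Definition is_graph_cycle (T : finType) (e : rel T) (c : seq T) : bool :=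
  [&& 3 <= size c, uniq c & cycle e c].

Definition induces_forest (T : finType) (e : rel T) (S : {set T}) : Prop :=
  forall c : seq T, all (fun v => v \in S) c -> ~~ is_graph_cycle e c.

Definition asbool (P : Prop) : bool :=
  if excluded_middle_informative P then true else false.

Definition a_forest (T : finType) (e : rel T) : nat :=
  \max_(S : {set T} | asbool (induces_forest e S)) #|S|.

Definition path_graph (n : nat) : rel 'I_n :=
  fun i j => (i.+1 == j :> nat) || (j.+1 == i :> nat).
Arguments path_graph n : clear implicits.

(* An induced forest of G and an induced forest of its complement meet in a
   set that is acyclic in both graphs, and such a set has at most 4 vertices:
   on 5 vertices G and its complement share the 10 pairs, so one of them has
   at least 5 edges and hence a cycle (below, a check of all 2^10 graphs).
   Thus a(G) + a(co-G) <= n + 4 by inclusion-exclusion.  For the path P_n,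
   all vertices induce a forest, and four vertices of the complement induce
   a path. *)
From mathcomp Require Import all_boot.
From Stdlib Require Import ClassicalEpsilon.
Set Implicit Arguments. Unset Strict Implicit. Unset Printing Implicit Defensive.

Lemma asboolP (P : Prop) : reflect P (asbool P).
Proof. by rewrite /asbool; case: excluded_middle_informative => p; constructor. Qed.

Section InducedForests.
Variables (T : finType) (e : rel T).

Lemma induces_forest0 : induces_forest e set0.
Proof. by case=> [|v c] //= /andP[]; rewrite inE. Qed.

Lemma induces_forestS (A B : {set T}) :
  A \subset B -> induces_forest e B -> induces_forest e A.
Proof.
move=> sAB forestB c /allP cA; apply: forestB; apply/allP => v /cA.
exact: (subsetP sAB).
Qed.

Lemma a_forest_max (S : {set T}) : induces_forest e S -> #|S| <= a_forest e.
Proof.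
by move=> forestS; apply: (leq_bigmax_cond (F := fun S : {set T} => #|S|)); apply/asboolP.
Qed.

Lemma a_forest_witness : exists2 S : {set T}, induces_forest e S & a_forest e = #|S|.
Proof.
rewrite /a_forest.
have [|S /asboolP forestS ->] := eq_bigmax_cond (fun S : {set T} => #|S|)
  (A := [pred S : {set T} | asbool (induces_forest e S)]); last by exists S.
by apply/card_gt0P; exists set0; apply/asboolP/induces_forest0.
Qed.

Lemma a_forest_le_card : a_forest e <= #|T|.
Proof. by apply/bigmax_leqP => S _; apply: max_card. Qed.

End InducedForests.

(* Candidate cycles on {0, ..., 4} up to rotation and reversal: the 10
   triangles, 15 quadrilaterals and 12 pentagons. *)
Definition cycles_on5 : seq (seq nat) :=
  [:: [:: 0; 1; 2]; [:: 0; 1; 3]; [:: 0; 1; 4]; [:: 0; 2; 3]; [:: 0; 2; 4];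
      [:: 0; 3; 4]; [:: 1; 2; 3]; [:: 1; 2; 4]; [:: 1; 3; 4]; [:: 2; 3; 4];
      [:: 0; 1; 2; 3]; [:: 0; 1; 3; 2]; [:: 0; 2; 1; 3]; [:: 0; 1; 2; 4];
      [:: 0; 1; 4; 2]; [:: 0; 2; 1; 4]; [:: 0; 1; 3; 4]; [:: 0; 1; 4; 3];
      [:: 0; 3; 1; 4]; [:: 0; 2; 3; 4]; [:: 0; 2; 4; 3]; [:: 0; 3; 2; 4];
      [:: 1; 2; 3; 4]; [:: 1; 2; 4; 3]; [:: 1; 3; 2; 4];
      [:: 0; 1; 2; 3; 4]; [:: 0; 1; 2; 4; 3]; [:: 0; 1; 3; 2; 4];
      [:: 0; 1; 3; 4; 2]; [:: 0; 1; 4; 2; 3]; [:: 0; 1; 4; 3; 2];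
      [:: 0; 2; 1; 3; 4]; [:: 0; 2; 1; 4; 3]; [:: 0; 2; 3; 1; 4];
      [:: 0; 2; 4; 1; 3]; [:: 0; 3; 1; 2; 4]; [:: 0; 3; 2; 1; 4]].

Lemma cycle_or_compl_cycle5 (g : rel nat) : symmetric g ->
  exists2 c : seq nat, [&& all (gtn 5) c, uniq c & 3 <= size c] &
    cycle g c || cycle (fun i j => (i != j) && ~~ g i j) c.
Proof.
move=> g_sym.
have /hasP[c c_cand c_cycle] :
    has (fun c => cycle g c || cycle (fun i j => (i != j) && ~~ g i j) c) cycles_on5.
  pose h i j := if i < j then g i j else g j i.
  have gh : g =2 h by move=> i j; rewrite /h; case: ltnP.
  rewrite (eq_has (a2 := fun c =>
    cycle h c || cycle (fun i j => (i != j) && ~~ h i j) c)); last first.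
    by move=> c /=; rewrite (eq_cycle gh); congr (_ || _); apply: eq_cycle => i j; rewrite gh.
  (* Reading g only above the diagonal leaves the 10 values g i j, i < j < 5, to case on. *)
  rewrite /h /=.
  by case: (g 0 1); case: (g 0 2); case: (g 0 3); case: (g 0 4); case: (g 1 2);
     case: (g 1 3); case: (g 1 4); case: (g 2 3); case: (g 2 4); case: (g 3 4).
by exists c => //; move: c c_cand {c_cycle}; apply/allP.
Qed.

Lemma card_bi_forest_le4 (T : finType) (e : rel T) (S : {set T}) : symmetric e ->
  induces_forest e S -> induces_forest (compl_graph e) S -> #|S| <= 4.
Proof.
move=> e_sym forestS co_forestS; rewrite leqNgt; apply/negP => S_big.
pose x (i : nat) := nth (enum_default (widen_ord S_big ord0)) (enum S) i.
have size_S : 5 <= size (enum S) by rewrite -cardE.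
have x_in i : i < 5 -> x i \in S.
  by move=> lt_i5; rewrite -mem_enum mem_nth // (leq_trans lt_i5).
have x_inj i j : i < 5 -> j < 5 -> (x i == x j) = (i == j).
  by move=> lt_i5 lt_j5; rewrite nth_uniq ?enum_uniq // (leq_trans _ size_S).
have [c /and3P[c_lt5 c_uniq c_size] c_cycle] :=
  @cycle_or_compl_cycle5 (fun i j => e (x i) (x j)) (fun i j => e_sym _ _).
have xc_in : all (fun v => v \in S) (map x c).
  by rewrite all_map; apply/allP => i /(allP c_lt5); apply: x_in.
have xc_uniq : uniq (map x c).
  by rewrite map_inj_in_uniq // => i j /(allP c_lt5) ? /(allP c_lt5) ? /eqP; rewrite x_inj // => /eqP.
have xc_size : 3 <= size (map x c) by rewrite size_map.
case/orP: c_cycle => c_cycle.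
- by move/negP: (forestS _ xc_in); apply; rewrite /is_graph_cycle xc_size xc_uniq cycle_map.
- move/negP: (co_forestS _ xc_in); apply; rewrite /is_graph_cycle xc_size xc_uniq cycle_map.
  rewrite (eq_in_cycle (P := gtn 5) (e' := fun i j => (i != j) && ~~ e (x i) (x j))) //.
  by move=> i j lt_i5 lt_j5; rewrite /compl_graph /= x_inj.
Qed.

Lemma a_forest_add_compl (T : finType) (e : rel T) : symmetric e ->
  a_forest e + a_forest (compl_graph e) <= #|T| + 4.
Proof.
move=> e_sym.
have [S1 forestS1 ->] := a_forest_witness e.
have [S2 forestS2 ->] := a_forest_witness (compl_graph e).
rewrite -cardsUI leq_add ?max_card //.
apply: (card_bi_forest_le4 e_sym).
- exact: induces_forestS (subsetIl S1 S2) forestS1.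
- exact: induces_forestS (subsetIr S1 S2) forestS2.
Qed.

Definition adjacent_nat (a b : nat) : bool := (a.+1 == b) || (b.+1 == a).

Lemma adjacent_nat_below (a b : nat) : adjacent_nat a b -> b <= a -> b.+1 = a.
Proof. by case/orP=> /eqP <- //; rewrite ltnn. Qed.

Lemma bigmax_seq_in (s : seq nat) : s != [::] -> \max_(x <- s) x \in s.
Proof.
elim: s => // x [_ _|y s IH _]; first by rewrite big_seq1 mem_head.
by rewrite big_cons /maxn; case: ltnP; rewrite in_cons ?IH ?eqxx ?orbT.
Qed.

(* Both cycle neighbours of the largest vertex must be its predecessor. *)
Lemma adjacent_nat_acyclic (d : seq nat) :
  uniq d -> 3 <= size d -> ~~ cycle adjacent_nat d.
Proof.
move=> d_uniq d_size; apply/negP => d_cycle.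
set m := \max_(x <- d) x.
have m_in : m \in d by apply: bigmax_seq_in; case: d d_size {d_uniq d_cycle m}.
have le_m x : x \in rot (index m d) d -> x <= m.
  by rewrite mem_rot => x_in; apply: leq_bigmax_seq.
rewrite -(rot_uniq (index m d)) -(size_rot (index m d)) in d_uniq d_size.
rewrite -(rot_cycle (index m d)) in d_cycle.
move: d_uniq d_size d_cycle le_m; rewrite rot_index //; set t := _ ++ _.
case: t => [|y r] //; case/lastP: r => [|r w] // d_uniq _ d_cycle le_m.
move: d_cycle; rewrite /= rcons_path last_rcons => /and3P[my _ wm].
have y_le_m : y <= m by apply: le_m; rewrite !in_cons eqxx orbT.
have w_le_m : w <= m by apply: le_m; rewrite !in_cons mem_rcons in_cons eqxx !orbT.
rewrite /adjacent_nat orbC -/(adjacent_nat m w) in wm.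
have yw : y.+1 = w.+1.
  by rewrite (adjacent_nat_below my y_le_m) (adjacent_nat_below wm w_le_m).
move: d_uniq => /= /and3P[_ + _].
by rewrite mem_rcons in_cons (succn_inj yw) eqxx.
Qed.

Lemma induces_forest_embedding (T : finType) (e : rel T) (S : {set T}) (f : T -> nat) :
  {in S &, injective f} -> {in S &, forall x y, e x y -> adjacent_nat (f x) (f y)} ->
  induces_forest e S.
Proof.
move=> f_inj f_adj c c_in; apply/negP => /and3P[c_size c_uniq c_cycle].
have := @adjacent_nat_acyclic (map f c).
rewrite map_inj_in_uniq ?size_map ?c_uniq ?c_size; last first.
  by move=> x y x_in y_in; apply: f_inj; apply: (allP c_in).
rewrite cycle_map => /(_ isT isT)/negP; apply.
exact: (sub_in_cycle (P := mem S) f_adj c_in c_cycle).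
Qed.

Lemma path_graph_sym (n : nat) : symmetric (path_graph n).
Proof. by move=> i j; rewrite /path_graph orbC. Qed.

Lemma a_forest_path_graph (n : nat) : a_forest (path_graph n) = n.
Proof.
apply/eqP; rewrite eqn_leq.
have := a_forest_le_card (path_graph n); rewrite card_ord => -> /=.
have forest_all : induces_forest (path_graph n) [set: 'I_n].
  by apply: (@induces_forest_embedding _ _ _ val) => // x y _ _; apply: val_inj.
by have := a_forest_max forest_all; rewrite cardsT card_ord.
Qed.

Lemma four_le_a_forest_compl_path_graph (n : nat) :
  4 <= n -> 4 <= a_forest (compl_graph (path_graph n)).
Proof.
move=> le4n.
pose S := widen_ord le4n @: [set: 'I_4].
have S_lt4 x : x \in S -> x < 4.
  by case/imsetP=> i _ ->; apply: (ltn_ord i).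
have forest_S : induces_forest (compl_graph (path_graph n)) S.
  (* In the complement, 0, 1, 2, 3 induce the path 2 - 0 - 3 - 1. *)
  apply: (@induces_forest_embedding _ _ _ (fun i : 'I_n => nth 0 [:: 1; 3; 0; 2] i)).
  - move=> x y /S_lt4 x_lt4 /S_lt4 y_lt4 /= fxy; apply: val_inj.
    by move: x y x_lt4 y_lt4 fxy => [[|[|[|[|x]]]] ?] [[|[|[|[|y]]]] ?].
  - move=> x y /S_lt4 x_lt4 /S_lt4 y_lt4.
    by move: x y x_lt4 y_lt4 => [[|[|[|[|x]]]] ?] [[|[|[|[|y]]]] ?].
have widen_inj : injective (widen_ord le4n) by move=> i j /(congr1 val) /= /val_inj.
by have := a_forest_max forest_S; rewrite /S card_imset // cardsT card_ord.
Qed.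

Theorem theorem3 :
  (forall (T : finType) (e : rel T), simple_graph e ->
     a_forest e + a_forest (compl_graph e) <= #|T| + 4)
  /\
  (forall n : nat, 4 <= n ->
     a_forest (path_graph n) + a_forest (compl_graph (path_graph n)) = n + 4).
Proof.
split=> [T e [e_sym _] | n le4n]; first exact: a_forest_add_compl.
apply/eqP; rewrite eqn_leq.
have := a_forest_add_compl (@path_graph_sym n); rewrite card_ord => -> /=.
by rewrite a_forest_path_graph leq_add2l four_le_a_forest_compl_path_graph.
Qed.
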